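(* Let $(X,d)$ be a metric space, $M>0$, $\delta>0$, $f:X\to[0,M]$ a function, $g:X\to[0,\infty)$ a continuous bounded function, and $A\subset X$ a closed set. Define $$\tilde f(x)=\min\Big\{M,\ \inf_{(p_0,\dots,p_n)\in\mathcal{P}(\delta,A,x)} f(p_0)+\sum_{k=0}^{n-1}g(p_k)d(p_k,p_{k+1})\Big\}.$$ Then: (A) $\tilde f:X\to[0,M]$; (B) for each $x\in A$, $0\le\tilde f(x)\le f(x)$; (C) if $x\in A$ and $f(x)=0$ then $\tilde f(x)=0$; (D) for all $x,y\in X$ with $d(x,y)\le\delta$, $|\tilde f(x)-\tilde f(y)|\le\max\{g(x),g(y)\}d(x,y)$; (E) $\mathrm{lip}_a[\tilde f](x)\le g(x)$ for every $x\in X$; (F) $\tilde f$ is $\max\{M\delta^{-1},\sup_{x\in X}g(x)\}$-Lipschitz.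
   Context: A discrete path is a finite sequence $P=(p_0,\dots,p_n)$ of points of $X$ with $n\ge1$; its mesh is $\max_{0\le k\le n-1}d(p_k,p_{k+1})$. For $x\in X$, $\mathcal{P}(\delta,A,x)$ is the set of discrete paths $(p_0,\dots,p_n)$ with mesh at most $\delta$, $p_0\in A$ and $p_n=x$ (the infimum over the empty set is $+\infty$). $\mathrm{lip}_a[h](x)=\lim_{r\to0}\sup_{a\ne b\in B(x,r)}\frac{|h(a)-h(b)|}{d(a,b)}$, and $\mathrm{lip}_a[h](x)=0$ if $x$ is isolated. *)

From HB Require Import structures.
From mathcomp Require Import all_boot all_order all_algebra.
From mathcomp Require Import all_classical all_reals all_analysis.
Set Implicit Arguments. Unset Strict Implicit. Unset Printing Implicit Defensive.
Import Order.TTheory GRing.Theory Num.Theory.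
Local Open Scope classical_set_scope.
Local Open Scope ring_scope.

Section Defs.
Variables (R : realType) (X : Type) (d : X -> X -> R).

Definition is_metric : Prop :=
  [/\ forall x, d x x = 0,
      forall x y, d x y = 0 -> x = y,
      forall x y, d x y = d y x
    & forall x y z, d x z <= d x y + d y z].

Definition metric_continuous (h : X -> R) : Prop :=
  forall x (eps : R), 0 < eps ->
    exists2 eta : R, 0 < eta & forall y, d x y < eta -> `|h x - h y| < eps.

Definition metric_closed (A : set X) : Prop :=
  forall x, (forall eps : R, 0 < eps -> exists a, A a /\ d x a < eps) -> A x.

Definition discrete_path (delta : R) (A : set X) (x : X) (n : nat) (p : nat -> X) :=
  [/\ (1 <= n)%N, forall k, (k < n)%N -> d (p k) (p k.+1) <= delta, A (p 0%N) & p n = x].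

Definition path_cost (f g : X -> R) (n : nat) (p : nat -> X) : R :=
  f (p 0%N) + \sum_(k < n) g (p k) * d (p k) (p k.+1).

(* ftilde(x) = min{M, inf over P(delta,A,x) of the cost}, inf of empty set = +oo *)
Definition ftilde (M delta : R) (A : set X) (f g : X -> R) (x : X) : R :=
  fine (mine M%:E
    (ereal_inf [set c : \bar R | exists n p,
                  discrete_path delta A x n p /\ c = (path_cost f g n p)%:E])).

Definition isolated (x : X) : Prop :=
  exists2 r : R, 0 < r & forall a, d x a < r -> a = x.

(* asymptotic Lipschitz constant:
   lim_{r->0} sup_{a<>b in B(x,r)} |h a - h b| / d(a,b); the function of r is
   nonincreasing, so the limit as r -> 0+ is the infimum over r > 0.
   Value 0 at isolated points. *)
Definition lip_a (h : X -> R) (x : X) : \bar R :=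
  if `[< isolated x >] then 0%E else
  ereal_inf [set s : \bar R | exists2 r : R, 0 < r &
     s = ereal_sup [set q : \bar R | exists a b,
            [/\ a <> b, d x a < r, d x b < r & q = (`|h a - h b| / d a b)%:E]]].

End Defs.

From HB Require Import structures.
From mathcomp Require Import all_boot all_order all_algebra.
From mathcomp Require Import all_classical all_reals all_analysis.
From mathcomp Require Import lra.
Set Implicit Arguments. Unset Strict Implicit. Unset Printing Implicit Defensive.
Import Order.TTheory GRing.Theory Num.Theory.
Local Open Scope classical_set_scope.
Local Open Scope ring_scope.

(* Appending a point y with d(x, y) <= delta to a path ending at x gives a path
   ending at y whose cost grew by g(x) d(x, y); hence ftilde(y) <= ftilde(x) +
   g(x) d(x, y), and symmetrically, which is (D). The one-point path (x, x)
   gives (B) and (C). Continuity of g turns (D) into (E), and (D) together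
   with the bound 0 <= ftilde <= M gives (F) (for d(x, y) > delta use
   |ftilde x - ftilde y| <= M < M d(x, y) / delta). *)

Lemma fine_mineK (R : realType) (M : R) (e : \bar R) :
  0 <= M -> (0 <= e)%E -> (fine (mine M%:E e))%:E = mine M%:E e.
Proof.
move=> M0; case: e => [r| |] //= r0; last by rewrite /Order.min ltey.
by rewrite -EFin_min.
Qed.

Section Metric.
Variables (R : realType) (X : Type) (d : X -> X -> R).
Hypothesis metric_d : is_metric d.

Lemma metric_sym x y : d x y = d y x.
Proof. by case: metric_d. Qed.

Lemma metric_ge0 x y : 0 <= d x y.
Proof.
case: metric_d => d0 _ dsym dtri; have := dtri x y x.
by rewrite d0 (dsym y x) => h; lra.
Qed.

Lemma metric_gt0 x y : x <> y -> 0 < d x y.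
Proof.
move=> xy; rewrite lt_neqAle metric_ge0 andbT; apply/eqP => dxy0.
by apply: xy; case: metric_d => _ + _ _; apply.
Qed.

Section LipschitzBounds.
Variables (h g : X -> R) (delta : R).
Hypotheses (delta_gt0 : 0 < delta)
  (h_local : forall x y, d x y <= delta ->
     `|h x - h y| <= Num.max (g x) (g y) * d x y).

Lemma lip_a_le_of_local x : 0 <= g x -> metric_continuous d g ->
  (lip_a d h x <= (g x)%:E)%E.
Proof.
move=> gx_ge0 g_cont; rewrite /lip_a; case: ifP => _; first by rewrite lee_fin.
apply/lee_addgt0Pr => e e_gt0; have [eta eta_gt0 g_near] := g_cont x e e_gt0.
pose r := Num.min eta (delta / 2).
have r_gt0 : 0 < r by rewrite lt_min eta_gt0 divr_gt0.
have r_le_eta : r <= eta by rewrite ge_min lexx.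
have r_le_delta : r <= delta / 2 by rewrite ge_min lexx orbT.
have g_ball a : d x a < r -> g a <= g x + e.
  move=> xa; have := g_near a (lt_le_trans xa r_le_eta).
  by rewrite ltr_norml => /andP[? ?]; lra.
apply: ge_ereal_inf; exists (ereal_sup [set q : \bar R | exists a b,
    [/\ a <> b, d x a < r, d x b < r & q = (`|h a - h b| / d a b)%:E]]).
  by exists r.
apply: ge_ereal_sup => _ [a [b [ab xa xb ->]]]; rewrite lee_fin.
have dab_gt0 := metric_gt0 ab.
have dab_le : d a b <= delta.
  have : d a b <= d a x + d x b by case: metric_d.
  rewrite (metric_sym a x); lra.
rewrite ler_pdivrMr //; apply: le_trans (h_local dab_le) _.
by apply: ler_wpM2r; [exact: ltW | rewrite ge_max !g_ball].
Qed.

Lemma lipschitz_of_local_bounded (M : R) : (forall x, 0 <= h x <= M) -> has_ubound (range g) ->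
  forall x y, `|h x - h y| <= Num.max (M / delta) (sup (range g)) * d x y.
Proof.
move=> h_bound g_ub x y; have dxy0 := metric_ge0 x y.
have g_le_sup z : g z <= sup (range g) by apply: ub_le_sup => //; exists z.
have [near|far] := leP (d x y) delta.
  apply: le_trans (h_local near) _; apply: ler_wpM2r => //.
  by rewrite ge_max !le_max !g_le_sup !orbT.
have : M / delta <= Num.max (M / delta) (sup (range g)) by rewrite le_max lexx.
move=> /(ler_wpM2r dxy0); apply: le_trans.
have M_le : M <= M / delta * d x y.
  have M0 : 0 <= M by case/andP: (h_bound x) => /le_trans; apply.
  by rewrite mulrAC ler_pdivlMr // ler_wpM2l // ltW.
have /andP[? ?] := h_bound x; have /andP[? ?] := h_bound y.
rewrite ler_norml; apply/andP; split; lra.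
Qed.

End LipschitzBounds.

Section Ftilde.
Variables (M delta : R) (f g : X -> R) (A : set X).
Hypotheses (M_gt0 : 0 < M) (f_bound : forall x, 0 <= f x <= M)
  (g_ge0 : forall x, 0 <= g x).

Let ft := ftilde d M delta A f g.

Definition path_costs x := [set c : \bar R | exists n p,
  discrete_path d delta A x n p /\ c = (path_cost d f g n p)%:E].

Lemma path_cost_ge0 n p : 0 <= path_cost d f g n p.
Proof.
apply: addr_ge0; first by case/andP: (f_bound (p 0%N)).
by apply: sumr_ge0 => k _; apply: mulr_ge0; [exact: g_ge0 | exact: metric_ge0].
Qed.

Lemma ftildeE x : (ft x)%:E = mine M%:E (ereal_inf (path_costs x)).
Proof.
apply: fine_mineK; first exact: ltW.
by apply: le_ereal_inf_tmp => _ [n [p [_ ->]]]; rewrite lee_fin path_cost_ge0.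
Qed.

Lemma ftilde_bound x : 0 <= ft x <= M.
Proof.
rewrite -!lee_fin ftildeE ge_min lexx andbT le_min lee_fin (ltW M_gt0) /=.
by apply: le_ereal_inf_tmp => _ [n [p [_ ->]]]; rewrite lee_fin path_cost_ge0.
Qed.

Lemma ftilde_le_cost x n p :
  discrete_path d delta A x n p -> ft x <= path_cost d f g n p.
Proof.
move=> px; rewrite -lee_fin ftildeE ge_min; apply/orP; right.
by apply: ereal_inf_lbound; exists n, p.
Qed.

Lemma ftilde_lt_cost x eps : ft x < M -> 0 < eps ->
  exists n p, discrete_path d delta A x n p /\ path_cost d f g n p < ft x + eps.
Proof.
move=> ftx_lt eps_gt0.
have infE : ereal_inf (path_costs x) = (ft x)%:E.
  move: (ftildeE x) ftx_lt; rewrite /Order.min; case: ifP => // _ [ftxM].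
  by rewrite ftxM ltxx.
have : (ereal_inf (path_costs x) < (ft x + eps)%:E)%E by rewrite infE lte_fin ltrDl.
by case/ereal_inf_lt => _ [n [p [px ->]]]; rewrite lte_fin; exists n, p.
Qed.

Definition snoc_path (p : nat -> X) n y k := if (k <= n)%N then p k else y.

Lemma discrete_path_snoc x y n p : d x y <= delta ->
  discrete_path d delta A x n p -> discrete_path d delta A y n.+1 (snoc_path p n y).
Proof.
move=> xy [n_ge1 mesh p0 pn]; split => //; last by rewrite /snoc_path ltnn.
move=> k; rewrite ltnS leq_eqVlt /snoc_path => /orP[/eqP ->|kn].
  by rewrite leqnn ltnn pn.
by rewrite (ltnW kn) kn; exact: mesh.
Qed.

Lemma path_cost_snoc x y n p : p n = x ->
  path_cost d f g n.+1 (snoc_path p n y) = path_cost d f g n p + g x * d x y.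
Proof.
move=> pn; rewrite /path_cost big_ord_recr /= addrA /snoc_path leqnn ltnn pn.
by congr (_ + _ + _); apply: eq_bigr => k _; rewrite (ltnW (ltn_ord k)) ltn_ord.
Qed.

Lemma ftilde_le_step x y : d x y <= delta -> ft y <= ft x + g x * d x y.
Proof.
move=> xy; have step_ge0 : 0 <= g x * d x y by rewrite mulr_ge0 ?metric_ge0.
have /andP[_ fty_le] := ftilde_bound y; have /andP[_ ftx_le] := ftilde_bound x.
have [M_le|ftx_lt] := leP M (ft x); first lra.
apply/ler_addgt0Pr => e e_gt0.
have [n [p [px cost_lt]]] := ftilde_lt_cost ftx_lt e_gt0.
apply: le_trans (ftilde_le_cost (discrete_path_snoc xy px)) _.
by case: px => _ _ _ pn; rewrite (path_cost_snoc _ pn); lra.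
Qed.

Lemma ftilde_local_lipschitz x y : d x y <= delta ->
  `|ft x - ft y| <= Num.max (g x) (g y) * d x y.
Proof.
move=> xy; have yx : d y x <= delta by rewrite metric_sym.
have := ftilde_le_step xy; have := ftilde_le_step yx; rewrite (metric_sym y x).
have : g x <= Num.max (g x) (g y) by rewrite le_max lexx.
move=> /(ler_wpM2r (metric_ge0 x y)).
have : g y <= Num.max (g x) (g y) by rewrite le_max lexx orbT.
move=> /(ler_wpM2r (metric_ge0 x y)).
by rewrite ler_norml => *; apply/andP; split; lra.
Qed.

Lemma ftilde_le_f x : 0 < delta -> A x -> ft x <= f x.
Proof.
move=> delta_gt0 Ax; have dxx : d x x = 0 by case: metric_d.
have px : discrete_path d delta A x 1 (fun _ => x).
  by split => // k _; rewrite dxx ltW.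
by have := ftilde_le_cost px; rewrite /path_cost big_ord1 dxx mulr0 addr0.
Qed.

End Ftilde.
End Metric.

Theorem lemma2p4 (R : realType) (X : Type) (d : X -> X -> R)
  (M delta : R) (f g : X -> R) (A : set X) :
  is_metric d -> 0 < M -> 0 < delta ->
  (forall x, 0 <= f x <= M) ->
  (forall x, 0 <= g x) -> metric_continuous d g ->
  (exists C : R, forall x, g x <= C) ->
  metric_closed d A ->
  let ft := ftilde d M delta A f g in
  (forall x, 0 <= ft x <= M) /\
  (forall x, A x -> 0 <= ft x <= f x) /\
  (forall x, A x -> f x = 0 -> ft x = 0) /\
  (forall x y, d x y <= delta ->
          `|ft x - ft y| <= Num.max (g x) (g y) * d x y) /\
  (forall x, (lip_a d ft x <= (g x)%:E)%E) /\
  (forall x y, `|ft x - ft y| <= Num.max (M / delta) (sup (range g)) * d x y).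
Proof.
move=> hd M_gt0 delta_gt0 f_bound g_ge0 g_cont [C g_le] _ ft.
have ft_bound x : 0 <= ft x <= M by exact: ftilde_bound.
have ft_local x y : d x y <= delta -> `|ft x - ft y| <= Num.max (g x) (g y) * d x y.
  exact: ftilde_local_lipschitz.
have ft_le_f x : A x -> 0 <= ft x <= f x.
  by move=> Ax; case/andP: (ft_bound x) => -> _; exact: ftilde_le_f.
split=> //; split=> //; split.
  by move=> x Ax fx0; apply/eqP; rewrite eq_le andbC -{2}fx0 ft_le_f.
split=> //; split=> [x|].
  exact (lip_a_le_of_local hd delta_gt0 ft_local (g_ge0 x) g_cont).
have g_ub : has_ubound (range g) by exists C => _ [z _ <-]; exact: g_le.
exact (lipschitz_of_local_bounded hd delta_gt0 ft_local ft_bound g_ub).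
Qed.
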